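(* Let $\mathcal{M}$ be a nontrivial graph matroid family with dimensionality $d$ and threshold $t$. Let $G=G_1\cup G_2$, where $G_1$ and $G_2$ are graphs with at least $t$ vertices in common. If $G_1$ and $G_2$ are both $\mathcal{M}$-rigid, then so is $G$.
   Context: All graphs are finite and simple and have no isolated vertices. A graph matroid family $\mathcal{M}$ assigns to every graph $G$ a matroid $\mathcal{M}(G)$ on $E(G)$ such that (i) every graph isomorphism $V(G)\to V(H)$ induces an isomorphism $\mathcal{M}(G)\to\mathcal{M}(H)$, and (ii) for every subgraph $H$ of $G$, $\mathcal{M}(H)$ is the restriction of $\mathcal{M}(G)$ to $E(H)$. $r(G)$ is the rank of $\mathcal{M}(G)$; $G$ is $\mathcal{M}$-rigid if $r(G)=r(K_{V(G)})$. $\mathcal{M}$ is nontrivial if some graph $G$ has $r(G)<|E(G)|$. An $\mathcal{M}$-circuit is a graph $C$ with $r(C)<|E(C)|$ and $r(C-e)=|E(C)|-1$ for all edges $e$. Dimensionality $d$: minimum over $\mathcal{M}$-circuits of (minimum degree $-1$); threshold $t$: minimum of $|V(C)|-1$ over $\mathcal{M}$-circuits $C$ of minimum degree $d+1$. $G_1\cup G_2$ is the graph with vertex set $V(G_1)\cup V(G_2)$ and edge set $E(G_1)\cup E(G_2)$. *)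

From HB Require Import structures.
From mathcomp Require Import all_boot all_order.
From mathcomp Require Import finmap.
Set Implicit Arguments. Unset Strict Implicit. Unset Printing Implicit Defensive.
Local Open Scope fset_scope.

(* Vertices are natural numbers (every finite graph is isomorphic to one on
   nat).  An edge {u,v} is encoded as the ordered pair (u,v) with u < v.
   A graph without isolated vertices is determined by its (finite) edge set. *)
Definition Edge := (nat * nat)%type.

Definition is_graph (G : {fset Edge}) : Prop := forall e, e \in G -> e.1 < e.2.

Definition verts (G : {fset Edge}) : {fset nat} :=
  [fset e.1 | e in G] `|` [fset e.2 | e in G].

Definition Kgraph (V : {fset nat}) : {fset Edge} :=
  [fset e in V `*` V | e.1 < e.2].

Definition emap (f : nat -> nat) (e : Edge) : Edge :=
  (minn (f e.1) (f e.2), maxn (f e.1) (f e.2)).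

Definition graph_iso (f : nat -> nat) (G H : {fset Edge}) : Prop :=
  {in verts G &, injective f} /\ [fset emap f e | e in G] = H.

Definition is_matroid (E : {fset Edge}) (I : {fset Edge} -> bool) : Prop :=
  [/\ I fset0,
      (forall A B, B `<=` E -> A `<=` B -> I B -> I A) &
      (forall A B, A `<=` E -> B `<=` E -> I A -> I B -> #|` A| < #|` B| ->
         exists2 x, x \in B `\` A & I (x |` A))].

Definition rankI (I : {fset Edge} -> bool) (F : {fset Edge}) : nat :=
  \max_(A <- fpowerset F | I A) #|` A|.

(* A graph matroid family: M G is the independence predicate of the matroid
   M(G) on E(G). *)
Definition graph_matroid_family (M : {fset Edge} -> {fset Edge} -> bool) : Prop :=
  [/\ (forall G, is_graph G -> is_matroid G (M G)),
      (forall G H f, is_graph G -> is_graph H -> graph_iso f G H ->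
         forall A, A `<=` G -> M G A = M H [fset emap f e | e in A]) &
      (forall G H, is_graph G -> H `<=` G ->
         forall A, A `<=` H -> M H A = M G A)].

Definition grank (M : {fset Edge} -> {fset Edge} -> bool) (G : {fset Edge}) : nat :=
  rankI (M G) G.

Definition rigid M (G : {fset Edge}) : Prop :=
  grank M G = grank M (Kgraph (verts G)).

Definition nontrivial M : Prop :=
  exists G, is_graph G /\ grank M G < #|` G|.

Definition circuit M (C : {fset Edge}) : Prop :=
  [/\ is_graph C, grank M C < #|` C| &
      forall e, e \in C -> grank M (C `\ e) = #|` C| - 1].

Definition deg (G : {fset Edge}) (v : nat) : nat :=
  #|` [fset e in G | (e.1 == v) || (e.2 == v)]|.

(* minimum degree (of a nonempty graph; the default #|G| is never smaller
   than any degree) *)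
Definition mindeg (G : {fset Edge}) : nat :=
  \big[minn/#|` G|]_(v <- verts G) deg G v.

Definition dimensionality M (d : nat) : Prop :=
  (exists C, circuit M C /\ mindeg C = d.+1) /\
  (forall C, circuit M C -> d.+1 <= mindeg C).

Definition threshold M (d t : nat) : Prop :=
  (exists C, [/\ circuit M C, mindeg C = d.+1 & #|` verts C| = t.+1]) /\
  (forall C, circuit M C -> mindeg C = d.+1 -> t.+1 <= #|` verts C|).

(* Work in the matroid M(K) of the complete graph K on V1 u V2, where
   Vi = V(Gi).  Rigidity of Gi says that Gi spans K(Vi), so G1 u G2 spans
   K(V1) u K(V2).  A remaining edge ab of K has a in V1 \ V2 and b in V2 \ V1
   (or vice versa).  Take a circuit C on t+1 vertices (one exists by the
   definition of the threshold) and an edge xy of C, and embed C into K with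
   x |-> a, y |-> b and the other t-1 vertices into V1 n V2.  Isomorphism
   invariance makes ab spanned by the other image edges, each of which has an
   endpoint in V1 n V2 and hence lies in K(V1) u K(V2). *)

From HB Require Import structures.
From mathcomp Require Import all_boot all_order.
From mathcomp Require Import finmap.
From mathcomp Require Import zify.
Set Implicit Arguments. Unset Strict Implicit. Unset Printing Implicit Defensive.
Local Open Scope fset_scope.

Implicit Types (A B C F G H W X Y : {fset Edge}) (e : Edge) (f : nat -> nat).

Definition spans (I : {fset Edge} -> bool) (X : {fset Edge}) (e : Edge) : Prop :=
  rankI I (e |` X) = rankI I X.

Section MatroidRank.
Variables (E : {fset Edge}) (I : {fset Edge} -> bool).
Hypothesis matI : is_matroid E I.

Lemma card_le_rankI F A : A `<=` F -> I A -> #|` A| <= rankI I F.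
Proof. by move=> AF IA; apply: (leq_bigmax_seq A); rewrite ?fpowersetE. Qed.

Lemma rankI_le_bound F n :
  (forall A, A `<=` F -> I A -> #|` A| <= n) -> rankI I F <= n.
Proof. by move=> bnd; apply/bigmax_leqP_seq => A; rewrite fpowersetE; apply: bnd. Qed.

Lemma rankIS X Y : X `<=` Y -> rankI I X <= rankI I Y.
Proof.
move=> XY; apply: rankI_le_bound => A AX; apply: card_le_rankI.
exact: fsubset_trans XY.
Qed.

Lemma spans_mem X e : e \in X -> spans I X e.
Proof. by move=> eX; rewrite /spans; congr rankI; apply/fsetUidPr; rewrite fsub1set. Qed.

Lemma rankI_eq_spans X Y e :
  X `<=` Y -> rankI I Y = rankI I X -> e \in Y -> spans I X e.
Proof.
move=> XY eqXY eY; apply/eqP; rewrite eqn_leq (rankIS (fsubsetU1 e X)) andbT -eqXY.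
by apply: rankIS; rewrite fsubUset fsub1set eY.
Qed.

Lemma eq_rankI (J : {fset Edge} -> bool) F :
  (forall A, A `<=` F -> I A = J A) -> rankI I F = rankI J F.
Proof.
move=> eqIJ; rewrite /rankI big_seq_cond [RHS]big_seq_cond; apply: eq_bigl => A.
by case: (boolP (A \in fpowerset F)) => //=; rewrite fpowersetE => /eqIJ.
Qed.

Lemma rankI_basis F : exists2 B, B `<=` F & I B /\ #|` B| = rankI I F.
Proof.
have [I0 _ _] := matI; rewrite /rankI big_seq_cond.
apply: (big_ind (fun n => exists2 B, B `<=` F & I B /\ #|` B| = n)).
- by exists fset0; rewrite ?fsub0set ?cardfs0.
- move=> m n [A AF [IA <-]] [B BF [IB <-]].
  case: (leqP #|` A| #|` B|) => [AB|/ltnW BA].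
    by exists B => //; split => //; apply/esym/maxn_idPr.
  by exists A => //; split => //; apply/esym/maxn_idPl.
- by move=> A /andP[]; rewrite fpowersetE => AF IA; exists A.
Qed.

Lemma rankI_extend F A : F `<=` E -> A `<=` F -> I A ->
  exists B, [/\ A `<=` B, B `<=` F, I B & #|` B| = rankI I F].
Proof.
move=> FE; have [_ _ exchange] := matI.
have [k] := ubnP (rankI I F - #|` A|); elim: k A => // k IHk A ltk AF IA.
have [ltAF|geAF] := ltnP #|` A| (rankI I F); last first.
  by exists A; split=> //; apply/eqP; rewrite eqn_leq geAF card_le_rankI.
have [B BF [IB cardB]] := rankI_basis F.
have [|x /fsetDP[xB xA] IxA] :=
  exchange A B (fsubset_trans AF FE) (fsubset_trans BF FE) IA IB; first by rewrite cardB.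
have xAF : x |` A `<=` F by rewrite fsubUset fsub1set (fsubsetP BF) ?AF.
have [|C [xAC CF IC cardC]] := IHk (x |` A) _ xAF IxA.
  by rewrite cardfsU1 xA; lia.
by exists C; split=> //; apply: fsubset_trans xAC; apply: fsubsetU1.
Qed.

Lemma spans_basisP X B e : X `<=` E -> e \in E ->
  B `<=` X -> I B -> #|` B| = rankI I X ->
  spans I X e <-> (e \in B) || ~~ I (e |` B).
Proof.
move=> XE eE BX IB cardB; split => [spXe|eBI].
  case: (boolP (e \in B)) => //= eB; apply/negP => IeB.
  have := card_le_rankI (fsetUS [fset e] BX) IeB.
  by rewrite cardfsU1 eB spXe -cardB ltnn.
apply/eqP; rewrite eqn_leq (rankIS (fsubsetU1 e X)) andbT leqNgt; apply/negP => lt.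
have [_ _ exchange] := matI.
have eXE : e |` X `<=` E by rewrite fsubUset fsub1set eE XE.
have [B' B'X [IB' cardB']] := rankI_basis (e |` X).
have [|x /fsetDP[xB' xB] IxB] :=
  exchange B B' (fsubset_trans BX XE) (fsubset_trans B'X eXE) IB IB'.
  by rewrite cardB cardB'.
have /fset1UP[xe|xX] := fsubsetP B'X x xB'.
  by move: eBI; rewrite -xe (negbTE xB) IxB.
have xBX : x |` B `<=` X by rewrite fsubUset fsub1set xX BX.
by have := card_le_rankI xBX IxB; rewrite cardfsU1 xB cardB ltnn.
Qed.

Lemma spansS X Y e : Y `<=` E -> e \in E -> X `<=` Y -> spans I X e -> spans I Y e.
Proof.
move=> YE eE XY spXe; have XE := fsubset_trans XY YE.
have [_ subI _] := matI.
have [BX BXX [IBX cardBX]] := rankI_basis X.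
have [BY [BXY BYY IBY cardBY]] := rankI_extend YE (fsubset_trans BXX XY) IBX.
apply/(spans_basisP YE eE BYY IBY cardBY).
case/orP: ((spans_basisP XE eE BXX IBX cardBX).1 spXe) => [/(fsubsetP BXY) -> //|].
move=> nIeBX; apply/orP; right; apply: contra nIeBX; apply: subI (fsetUS _ BXY).
by rewrite fsubUset fsub1set eE (fsubset_trans BYY YE).
Qed.

Lemma rankI_spanned X Y : Y `<=` E -> X `<=` Y ->
  {in Y, forall e, spans I X e} -> rankI I Y = rankI I X.
Proof.
move=> YE XY spX; have XE := fsubset_trans XY YE.
have [_ subI _] := matI.
have [BX BXX [IBX cardBX]] := rankI_basis X.
have [BY [BXY BYY IBY cardBY]] := rankI_extend YE (fsubset_trans BXX XY) IBX.
suff BYX : BY `<=` BX.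
  by apply/eqP; rewrite eqn_leq (rankIS XY) andbT -cardBY -cardBX fsubset_leq_card.
apply/fsubsetP => e eBY; have eY := fsubsetP BYY e eBY; have eE := fsubsetP YE e eY.
case/orP: ((spans_basisP XE eE BXX IBX cardBX).1 (spX e eY)) => // /negP[].
apply: (subI _ BY) => //; first exact: fsubset_trans BYY YE.
by rewrite fsubUset fsub1set eBY.
Qed.

End MatroidRank.

Lemma rankI_imfset (I J : {fset Edge} -> bool) (phi : Edge -> Edge) F :
  {in F &, injective phi} -> (forall A, A `<=` F -> J (phi @` A) = I A) ->
  rankI J (phi @` F) = rankI I F.
Proof.
move=> phi_inj eqJI.
have card_phi A : A `<=` F -> #|` phi @` A| = #|` A|.
  by move=> /fsubsetP AF; apply: card_in_imfset => u v /AF uF /AF vF; apply: phi_inj.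
apply/eqP; rewrite eqn_leq; apply/andP; split.
  apply: rankI_le_bound => A' A'F JA'.
  pose A := [fset e in F | phi e \in A'].
  have AF : A `<=` F by apply/fsubsetP => e; rewrite inE => /andP[].
  have phiA : phi @` A = A'.
    apply/fsetP => w; apply/imfsetP/idP => [[e /=]|wA'].
      by rewrite inE => /andP[_ ?] ->.
    have /imfsetP[e /= eF we] := fsubsetP A'F w wA'.
    by exists e; rewrite // !inE eF -we.
  by rewrite -phiA card_phi // card_le_rankI // -eqJI // phiA.
apply: rankI_le_bound => A AF IA; rewrite -card_phi // card_le_rankI ?eqJI //.
by apply/fsubsetP => _ /imfsetP[e /= eA ->]; apply/imfsetP; exists e => //; apply: (fsubsetP AF).
Qed.

Lemma fst_verts G e : e \in G -> e.1 \in verts G.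
Proof. by move=> eG; rewrite inE; apply/orP; left; apply/imfsetP; exists e. Qed.

Lemma snd_verts G e : e \in G -> e.2 \in verts G.
Proof. by move=> eG; rewrite inE; apply/orP; right; apply/imfsetP; exists e. Qed.

Lemma vertsU G1 G2 : verts (G1 `|` G2) = verts G1 `|` verts G2.
Proof. by rewrite /verts !imfsetU fsetUACA. Qed.

Lemma in_Kgraph (V : {fset nat}) e :
  (e \in Kgraph V) = [&& e.1 \in V, e.2 \in V & e.1 < e.2].
Proof. by rewrite /Kgraph !inE /= andbA. Qed.

Lemma Kgraph_graph (V : {fset nat}) : is_graph (Kgraph V).
Proof. by move=> e; rewrite in_Kgraph => /and3P[]. Qed.

Lemma KgraphS (V V' : {fset nat}) : V `<=` V' -> Kgraph V `<=` Kgraph V'.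
Proof.
move=> /fsubsetP VV'; apply/fsubsetP => e; rewrite !in_Kgraph => /and3P[e1V e2V ->].
by rewrite !VV'.
Qed.

Lemma graph_sub_Kgraph G : is_graph G -> G `<=` Kgraph (verts G).
Proof. by move=> gG; apply/fsubsetP => e eG; rewrite in_Kgraph fst_verts ?snd_verts ?gG. Qed.

Lemma minmax_KgraphU (V1 V2 : {fset nat}) m n : m != n ->
  m \in V1 `|` V2 -> n \in V1 `|` V2 -> (m \in V1 `&` V2) || (n \in V1 `&` V2) ->
  (minn m n, maxn m n) \in Kgraph V1 `|` Kgraph V2.
Proof.
move=> mn; rewrite !in_fsetU !in_fsetI !in_Kgraph /=.
case: (ltnP m n) => [-> | le_nm]; last have -> : n < m by rewrite ltn_neqAle eq_sym mn.
all: rewrite !andbT.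
all: by case: (m \in V1); case: (m \in V2); case: (n \in V1); case: (n \in V2).
Qed.

Lemma emap_neq f G e : is_graph G -> {in verts G &, injective f} -> e \in G ->
  f e.1 != f e.2.
Proof.
move=> gG finj eG; apply/eqP => /(finj _ _ (fst_verts eG) (snd_verts eG)) e12.
by move: (gG e eG); rewrite e12 ltnn.
Qed.

Lemma emap_graph f G : is_graph G -> {in verts G &, injective f} ->
  is_graph (emap f @` G).
Proof.
move=> gG finj _ /imfsetP[e /= eG ->]; have := emap_neq gG finj eG.
by rewrite /emap /=; lia.
Qed.

Lemma emap_in_inj f G : is_graph G -> {in verts G &, injective f} ->
  {in G &, injective (emap f)}.
Proof.
move=> gG finj [p q] [p' q'] eG e'G.
have := emap_neq gG finj eG; have := emap_neq gG finj e'G.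
rewrite /emap /= => ne' ne [min_eq max_eq].
have /= [pG qG] := (fst_verts eG, snd_verts eG).
have /= [p'G q'G] := (fst_verts e'G, snd_verts e'G).
have : f p = f p' /\ f q = f q' \/ f p = f q' /\ f q = f p' by lia.
case=> [[/(finj _ _ pG p'G) -> /(finj _ _ qG q'G) ->] // | [fpq' fqp']].
have := gG _ eG; have := gG _ e'G.
by rewrite /= (finj _ _ pG q'G fpq') (finj _ _ qG p'G fqp'); lia.
Qed.

Lemma emap_sub_KgraphU f C (V1 V2 : {fset nat}) x y :
  is_graph C -> {in verts C &, injective f} -> (x, y) \in C ->
  {in verts C, forall z, f z \in V1 `|` V2} ->
  (forall z, z \in verts C -> z != x -> z != y -> f z \in V1 `&` V2) ->
  emap f @` (C `\ (x, y)) `<=` Kgraph V1 `|` Kgraph V2.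
Proof.
move=> gC finj xyC fV fT.
apply/fsubsetP => _ /imfsetP[[p q] /= /fsetD1P[pq_xy pqC] ->].
have /= [pC qC] := (fst_verts pqC, snd_verts pqC).
apply: minmax_KgraphU; rewrite ?fV ?(emap_neq gC finj pqC) //.
have : (p != x) && (p != y) || (q != x) && (q != y).
  by move: pq_xy (gC _ pqC) (gC _ xyC); rewrite xpair_eqE /=; lia.
by case/orP => /andP[zx zy]; [rewrite /= (fT p) | rewrite /= (fT q) ?orbT].
Qed.

Lemma nth_index_in_inj (T : eqType) (x0 : T) (s tau : seq T) :
  uniq tau -> size s <= size tau -> {in s &, injective (fun z => nth x0 tau (index z s))}.
Proof.
move=> utau sz z1 z2 z1s z2s /eqP; rewrite nth_uniq ?(leq_trans _ sz) ?index_mem //.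
by move=> /eqP; apply: index_inj.
Qed.

Lemma exists_inj_pair_into (V T : {fset nat}) x y a b :
  x \in V -> y \in V -> x != y -> #|` V| <= (#|` T|).+2 ->
  a \notin T -> b \notin T -> a != b ->
  exists f, [/\ {in V &, injective f}, f x = a, f y = b &
    forall z, z \in V -> z != x -> z != y -> f z \in T].
Proof.
move=> xV yV xy cardV aT bT ab.
set r := enum_fset (V `\ x `\ y).
have in_r z : z \in V -> z != x -> z != y -> z \in r.
  by move=> zV zx zy; rewrite !inE zV zx zy.
have size_r : (size r).+2 = #|` V|.
  by rewrite (cardfsD1 x V) (cardfsD1 y (V `\ x)) xV !inE eq_sym xy yV.
have in_s z : z \in V -> z \in [:: x, y & r].
  by move=> zV; rewrite !inE; case: eqVneq => //= zx; case: eqVneq => //= zy; apply: in_r.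
exists (fun z => nth 0 [:: a, b & enum_fset T] (index z [:: x, y & r])); split.
- move=> z1 z2 /in_s z1s /in_s z2s; apply: nth_index_in_inj; rewrite /= ?size_r //.
  by rewrite !inE negb_or ab aT bT fset_uniq.
- by rewrite /= eqxx.
- by rewrite /= (negbTE xy) eqxx.
move=> z zV zx zy; rewrite /= eq_sym (negbTE zx) eq_sym (negbTE zy).
apply: mem_nth; rewrite (leq_trans _ (_ : size r <= #|` T|)) ?index_mem ?in_r //.
by rewrite -ltnS -ltnS size_r.
Qed.

Section GraphMatroidFamily.
Variable M : {fset Edge} -> {fset Edge} -> bool.
Hypothesis famM : graph_matroid_family M.

Lemma rankI_restrict W H X : is_graph W -> H `<=` W -> X `<=` H ->
  rankI (M H) X = rankI (M W) X.
Proof.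
have [_ _ restrM] := famM; move=> gW HW XH; apply: eq_rankI => A AX.
by apply: restrM => //; apply: fsubset_trans AX XH.
Qed.

Lemma grank_restrict W H : is_graph W -> H `<=` W -> grank M H = rankI (M W) H.
Proof. by move=> gW HW; apply: rankI_restrict. Qed.

Lemma rankI_emap f C B : is_graph C -> {in verts C &, injective f} -> B `<=` C ->
  rankI (M (emap f @` C)) (emap f @` B) = rankI (M C) B.
Proof.
have [_ isoM _] := famM; move=> gC finj BC.
apply: rankI_imfset => [u v /(fsubsetP BC) uC /(fsubsetP BC) vC|A AB].
  exact: (emap_in_inj gC finj uC vC).
have AC := fsubset_trans AB BC.
by rewrite (isoM C _ f gC (emap_graph gC finj) (conj finj erefl) A AC).
Qed.

Lemma circuit_spans C e : circuit M C -> e \in C -> spans (M C) (C `\ e) e.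
Proof.
move=> [gC rkC critC] eC; rewrite /spans fsetD1K //.
have rkCe : rankI (M C) (C `\ e) = #|` C| - 1.
  by rewrite -(grank_restrict gC (fsubD1set C e)) critC.
have := rankIS (M C) (fsubD1set C e); rewrite rkCe.
by move: rkC; rewrite /grank; lia.
Qed.

Lemma spans_emap_circuit W C f e : is_graph W -> circuit M C -> e \in C ->
  {in verts C &, injective f} -> emap f @` C `<=` W ->
  spans (M W) (emap f @` (C `\ e)) (emap f e).
Proof.
move=> gW circC eC finj CW; have [gC _ _] := circC.
have CeC : emap f @` (C `\ e) `<=` emap f @` C.
  by apply: subset_imfset => u /fsetD1P[].
rewrite /spans -imfsetU1 fsetD1K // -!(rankI_restrict gW CW) ?fsubset_refl //.
rewrite !rankI_emap ?fsubD1set ?fsubset_refl //.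
by have := circuit_spans circC eC; rewrite /spans fsetD1K.
Qed.

Lemma spans_KgraphU C (V1 V2 : {fset nat}) : circuit M C ->
  #|` verts C| <= (#|` V1 `&` V2|).+2 ->
  {in Kgraph (V1 `|` V2), forall e,
     spans (M (Kgraph (V1 `|` V2))) (Kgraph V1 `|` Kgraph V2) e}.
Proof.
move=> circC cardC [a b] abW.
set W := Kgraph (V1 `|` V2); set Y := Kgraph V1 `|` Kgraph V2; set T := V1 `&` V2.
have gW : is_graph W := @Kgraph_graph _.
have YW : Y `<=` W by rewrite fsubUset !KgraphS ?fsubsetUl ?fsubsetUr.
have [abY|abY] := boolP ((a, b) \in Y); first exact: spans_mem.
have [gC rkC _] := circC.
move: (abW); rewrite in_Kgraph /= => /and3P[aV bV lt_ab].
have ne_ab : a != b by rewrite neq_ltn lt_ab.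
have /norP[aT bT] : ~~ ((a \in T) || (b \in T)).
  apply: contra abY => abT; have := minmax_KgraphU ne_ab aV bV abT.
  by rewrite (minn_idPl (ltnW lt_ab)) (maxn_idPr (ltnW lt_ab)).
have [[x y] xyC] : {e | e \in C}.
  by case: (fset_0Vmem C) => // C0; move: rkC; rewrite C0 cardfs0.
have ne_xy : x != y by rewrite neq_ltn (gC _ xyC).
have [f [finj fx fy fT]] := exists_inj_pair_into (fst_verts xyC) (snd_verts xyC)
  ne_xy cardC aT bT ne_ab.
have fV z : z \in verts C -> f z \in V1 `|` V2.
  move=> zC; case: (eqVneq z x) => [->|zx]; first by rewrite fx.
  case: (eqVneq z y) => [->|zy]; first by rewrite fy.
  by have := fT z zC zx zy; rewrite !inE => /andP[->].
have CY : emap f @` (C `\ (x, y)) `<=` Y := emap_sub_KgraphU gC finj xyC fV fT.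
have fxy : emap f (x, y) = (a, b).
  by rewrite /emap /= fx fy (minn_idPl (ltnW lt_ab)) (maxn_idPr (ltnW lt_ab)).
have CW : emap f @` C `<=` W.
  by rewrite -(fsetD1K xyC) imfsetU1 fxy fsubUset fsub1set abW (fsubset_trans CY YW).
have [matM _ _] := famM.
rewrite -fxy; apply: (spansS (matM W gW) YW _ CY); first by rewrite fxy.
exact: spans_emap_circuit gW circC xyC finj CW.
Qed.

End GraphMatroidFamily.

Unset Implicit Arguments.

Theorem lemma2p3 (M : {fset Edge} -> {fset Edge} -> bool) (d t : nat)
  (G1 G2 : {fset Edge}) :
  graph_matroid_family M -> nontrivial M ->
  dimensionality M d -> threshold M d t ->
  is_graph G1 -> is_graph G2 ->
  t <= #|` verts G1 `&` verts G2| ->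
  rigid M G1 -> rigid M G2 -> rigid M (G1 `|` G2).
Proof.
move=> famM _ _ [[C [circC _ cardC]] _] gG1 gG2 cardT.
rewrite /rigid vertsU; set V1 := verts G1 in cardT *; set V2 := verts G2 in cardT *.
set W := Kgraph (V1 `|` V2); set Y := Kgraph V1 `|` Kgraph V2.
have gW : is_graph W := @Kgraph_graph _.
have [matM _ _] := famM; have matW := matM W gW.
have [G1K G2K] := (graph_sub_Kgraph gG1, graph_sub_Kgraph gG2).
have K1W : Kgraph V1 `<=` W by apply/KgraphS/fsubsetUl.
have K2W : Kgraph V2 `<=` W by apply/KgraphS/fsubsetUr.
have GY : G1 `|` G2 `<=` Y := fsetUSS G1K G2K.
have YW : Y `<=` W by rewrite fsubUset K1W K2W.
have GW := fsubset_trans GY YW.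
rewrite !(grank_restrict famM gW) ?(fsubset_trans G1K) ?(fsubset_trans G2K)
  // => rig1 rig2.
have spansG : {in Y, forall e, spans (M W) (G1 `|` G2) e}.
  move=> e /fsetUP[eK|eK].
    apply: (spansS matW GW (fsubsetP K1W e eK) (fsubsetUl G1 G2)).
    exact: rankI_eq_spans G1K (esym rig1) eK.
  apply: (spansS matW GW (fsubsetP K2W e eK) (fsubsetUr G1 G2)).
  exact: rankI_eq_spans G2K (esym rig2) eK.
rewrite (rankI_spanned matW (fsubset_refl W) YW (spans_KgraphU famM circC _)).
  exact/esym/(rankI_spanned matW YW GY spansG).
by rewrite cardC ltnS leqW.
Qed.
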